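(* The language $\mathcal{L}(\boxdot)$ is less expressive than $\mathcal{L}(\boxplus)$ on each of the following classes: the class of all bimodal models, the class of serial bimodal models, the class of transitive bimodal models, and the class of Euclidean bimodal models. That is, on each such class $\mathbb{C}$: (i) for every $\phi\in\mathcal{L}(\boxdot)$ there is $\psi\in\mathcal{L}(\boxplus)$ with $\mathcal{M},s\vDash\phi \iff \mathcal{M},s\vDash\psi$ for all $\mathcal{M}\in\mathbb{C}$ and all states $s$ of $\mathcal{M}$; and (ii) the converse fails: there is $\psi\in\mathcal{L}(\boxplus)$ such that no $\phi\in\mathcal{L}(\boxdot)$ is equivalent to $\psi$ on all pointed models from $\mathbb{C}$.
   Context: Fix a nonempty set $\mathbf{P}$ of propositional variables. A bimodal model is $\mathcal{M}=\langle S,R_1,R_2,V\rangle$ with $S$ a nonempty set, $R_1,R_2\subseteq S\times S$, and $V:\mathbf{P}\to\mathcal{P}(S)$; a bimodal frame is such a tuple without $V$. For a property $P$ of binary relations (seriality, reflexivity, transitivity, symmetry, Euclidicity), a bimodal model/frame is called $P$ if both $R_1$ and $R_2$ have $P$. Write $R_i(s)=\{t\mid sR_it\}$. The languages are $\mathcal{L}(\boxdot):\ \phi::=p\mid\neg\phi\mid(\phi\wedge\phi)\mid\boxdot\phi$ and $\mathcal{L}(\boxplus):\ \phi::=p\mid\neg\phi\mid(\phi\wedge\phi)\mid\boxplus\phi$ with $p\in\mathbf{P}$ (other Boolean connectives, $\top,\bot$ are abbreviations). Truth: $\mathcal{M},s\vDash p$ iff $s\in V(p)$; Booleans as usual; $\mathcal{M},s\vDash\boxdot\phi$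 iff for all $t,u$ with $sR_1t$ and $sR_2u$, ($\mathcal{M},t\vDash\phi\iff\mathcal{M},u\vDash\phi$); $\mathcal{M},s\vDash\boxplus\phi$ iff ($\mathcal{M},t\vDash\phi$ for all $t\in R_1(s)$) or ($\mathcal{M},u\vDash\neg\phi$ for all $u\in R_2(s)$). *)

From Stdlib Require Import Classical.
Set Implicit Arguments.

Section Bimodal.
Variable P : Type.

Inductive formD : Type :=
| VarD : P -> formD
| NegD : formD -> formD
| AndD : formD -> formD -> formD
| BoxDot : formD -> formD.

Inductive formP : Type :=
| VarP : P -> formP
| NegP : formP -> formP
| AndP : formP -> formP -> formP
| BoxPlus : formP -> formP.

Record model : Type := Model {
  state : Type;
  state_inh : inhabited state;
  R1 : state -> state -> Prop;
  R2 : state -> state -> Prop;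
  val : P -> state -> Prop
}.

Fixpoint satD (M : model) (s : state M) (phi : formD) : Prop :=
  match phi with
  | VarD p => val M p s
  | NegD a => ~ satD M s a
  | AndD a b => satD M s a /\ satD M s b
  | BoxDot a => forall t u, R1 M s t -> R2 M s u -> (satD M t a <-> satD M u a)
  end.

Fixpoint satP (M : model) (s : state M) (phi : formP) : Prop :=
  match phi with
  | VarP p => val M p s
  | NegP a => ~ satP M s a
  | AndP a b => satP M s a /\ satP M s b
  | BoxPlus a => (forall t, R1 M s t -> satP M t a) \/
                 (forall u, R2 M s u -> ~ satP M u a)
  end.

End Bimodal.

Arguments VarD {P}. Arguments VarP {P}.

Definition serial_rel (S : Type) (R : S -> S -> Prop) := forall x, exists y, R x y.
Definition transitive_rel (S : Type) (R : S -> S -> Prop) :=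
  forall x y z, R x y -> R y z -> R x z.
Definition euclidean_rel (S : Type) (R : S -> S -> Prop) :=
  forall x y z, R x y -> R x z -> R y z.

Inductive model_class : Type := AllModels | SerialModels | TransitiveModels | EuclideanModels.

Definition in_class {P : Type} (c : model_class) (M : model P) : Prop :=
  match c with
  | AllModels => True
  | SerialModels => serial_rel (R1 M) /\ serial_rel (R2 M)
  | TransitiveModels => transitive_rel (R1 M) /\ transitive_rel (R2 M)
  | EuclideanModels => euclidean_rel (R1 M) /\ euclidean_rel (R2 M)
  end.

Definition equiv_on {P : Type} (c : model_class) (phi : formD P) (psi : formP P) : Prop :=
  forall (M : model P) (s : state M), in_class c M -> (satD M s phi <-> satP M s psi).

From Stdlib Require Import Classical.

(* For any two relations, "all R1- and R2-successors agree on
   A" holds iff both "all R1-successors satisfy A or no R2-successor does" and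
   the same statement for not-A hold; i.e. boxdot a = boxplus a /\ boxplus ~a.
   A compositional translation based on this identity is correct on every
   model, hence on every class.
   (ii) Separation.  Boxdot is symmetric in R1 and R2, so L(boxdot) cannot
   tell a model from its swap (R1 and R2 exchanged); each of the four classes
   is closed under swapping.  On the two-point model in which every state sees
   exactly the p-state via R1 and exactly the non-p-state via R2 (which lies in
   all four classes), boxplus p holds at the p-state but fails after swapping,
   so boxplus p has no boxdot equivalent. *)

Lemma boxdot_as_boxplus (S : Type) (Q1 Q2 : S -> S -> Prop) (s : S) (A : S -> Prop) :
  (forall t u, Q1 s t -> Q2 s u -> (A t <-> A u)) <->
  ((forall t, Q1 s t -> A t) \/ (forall u, Q2 s u -> ~ A u)) /\
  ((forall t, Q1 s t -> ~ A t) \/ (forall u, Q2 s u -> ~ ~ A u)).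
Proof.
  split.
  - intros agree. split.
    + destruct (classic (forall t, Q1 s t -> A t)) as [all_A | not_all_A];
        [now left | right].
      destruct (not_all_ex_not _ _ not_all_A) as [t Ht].
      intros u Hu Au. apply Ht. intros Hst. now apply (agree t u Hst Hu).
    + destruct (classic (forall t, Q1 s t -> ~ A t)) as [no_A | some_A];
        [now left | right].
      destruct (not_all_ex_not _ _ some_A) as [t Ht].
      intros u Hu not_Au. apply Ht. intros Hst At.
      now apply not_Au, (agree t u Hst Hu).
  - intros [[all_A | no_A2] [no_A1 | all_A2]] t u Ht Hu.
    + exfalso. exact (no_A1 t Ht (all_A t Ht)).
    + specialize (all_A t Ht). specialize (all_A2 u Hu). tauto.
    + specialize (no_A2 u Hu). specialize (no_A1 t Ht). tauto.
    + specialize (no_A2 u Hu). specialize (all_A2 u Hu). tauto.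
Qed.

Fixpoint translate {P : Type} (phi : formD P) : formP P :=
  match phi with
  | VarD p => VarP p
  | NegD a => NegP (translate a)
  | AndD a b => AndP (translate a) (translate b)
  | BoxDot a => AndP (BoxPlus (translate a)) (BoxPlus (NegP (translate a)))
  end.

Lemma translate_correct {P : Type} (phi : formD P) (M : model P) (s : state M) :
  satD M s phi <-> satP M s (translate phi).
Proof.
  revert s.
  induction phi as [p | a IH | a IHa b IHb | a IH]; intros s; simpl.
  - reflexivity.
  - now rewrite IH.
  - now rewrite IHa, IHb.
  - rewrite (boxdot_as_boxplus (state M) (R1 M) (R2 M) s (fun t => satD M t a)).
    setoid_rewrite IH. reflexivity.
Qed.

Definition swap {P : Type} (M : model P) : model P :=
  @Model P (state M) (state_inh M) (R2 M) (R1 M) (val M).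

Lemma satD_swap {P : Type} (phi : formD P) (M : model P) (s : state M) :
  satD M s phi <-> satD (swap M) s phi.
Proof.
  revert s.
  induction phi as [p | a IH | a IHa b IHb | a IH]; intros s; simpl.
  - reflexivity.
  - now rewrite IH.
  - now rewrite IHa, IHb.
  - split; intros agree t u Ht Hu.
    + rewrite <- !IH. symmetry. now apply agree.
    + rewrite !IH. symmetry. now apply agree.
Qed.

Lemma in_class_swap {P : Type} (c : model_class) (M : model P) :
  in_class c M -> in_class c (swap M).
Proof. destruct c; simpl; tauto. Qed.

Lemma boxdot_definable_swap_invariant {P : Type} (c : model_class)
    (phi : formD P) (psi : formP P) (M : model P) (s : state M) :
  equiv_on c phi psi -> in_class c M -> satP M s psi -> satP (swap M) s psi.
Proof.
  intros equiv HM Hpsi.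
  apply (equiv (swap M) s (in_class_swap c M HM)).
  apply (proj1 (satD_swap phi M s)), (equiv M s HM), Hpsi.
Qed.

(* Every state sees the p-state [true] via R1 and the non-p-state [false] via
   R2: both relations are constant, hence serial, transitive and Euclidean. *)
Definition split_model (P : Type) : model P :=
  @Model P bool (inhabits true) (fun _ t => t = true) (fun _ t => t = false)
    (fun _ s => s = true).

Lemma split_model_in_class {P : Type} (c : model_class) : in_class c (split_model P).
Proof.
  destruct c; simpl; unfold serial_rel, transitive_rel, euclidean_rel; simpl;
    repeat split; eauto.
Qed.

Lemma boxplus_var_split_model {P : Type} (p : P) :
  satP (split_model P) true (BoxPlus (VarP p)).
Proof. simpl. now left. Qed.

Lemma not_boxplus_var_swap_split_model {P : Type} (p : P) :
  ~ satP (swap (split_model P)) true (BoxPlus (VarP p)).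
Proof.
  simpl. intros [all_R1 | none_R2].
  - discriminate (all_R1 false eq_refl).
  - exact (none_R2 true eq_refl eq_refl).
Qed.

Theorem proposition3p2 :
  forall (P : Type), inhabited P ->
  forall c : model_class,
    (forall phi : formD P, exists psi : formP P, equiv_on c phi psi) /\
    (exists psi : formP P, forall phi : formD P, ~ equiv_on c phi psi).
Proof.
  intros P [p] c. split.
  - intros phi. exists (translate phi). intros M s _. apply translate_correct.
  - exists (BoxPlus (VarP p)). intros phi equiv.
    apply (not_boxplus_var_swap_split_model p).
    apply (boxdot_definable_swap_invariant c phi _ _ _ equiv (split_model_in_class c)).
    apply boxplus_var_split_model.
Qed.
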